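(* Let $D \subseteq L$ be a total clone on $\{0,1\}$ such that $D \subseteq B$ for some $B \in \{T_0, T_1, S\}$. Then $\mathcal{I}_{\mathrm{str}}(D)$ has the cardinality of the continuum.
   Context: Let $\mathbf{2}=\{0,1\}$. A partial function of arity $n$ on $\mathbf{2}$ is a map $f:\operatorname{dom} f\to\mathbf{2}$ with $\operatorname{dom} f\subseteq \mathbf{2}^n$; it is total if $\operatorname{dom} f=\mathbf{2}^n$. $P_{\mathbf{2}}$ is the set of all partial functions, $O_{\mathbf{2}}$ the set of total ones. Composition $F=f(g_1,\dots,g_n)$ is given by $F(\mathbf{x})=f(g_1(\mathbf{x}),\dots,g_n(\mathbf{x}))$ on $\operatorname{dom} F=\{\mathbf{x}\in\bigcap_i\operatorname{dom} g_i : (g_1(\mathbf{x}),\dots,g_n(\mathbf{x}))\in\operatorname{dom} f\}$. A partial clone is a composition-closed subset of $P_{\mathbf{2}}$ containing all projections; a total clone is one contained in $O_{\mathbf{2}}$. A partial clone $X$ is strong if it contains every restriction of each of its members. For a total clone $C$, $\mathcal{I}_{\mathrm{str}}(C)$ is the set of all strong partial clones $X$ with $X\cap O_{\mathbf{2}}=C$. $L$ is the clone of linear functions $a_0\oplus a_1x_1\oplus\cdots\oplus a_nx_n$; $T_a$ is the clone of total functions with $f(a,\dots,a)=a$; $S$ is the clone of self-dual total functions. *)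

From HB Require Import structures.
From mathcomp Require Import all_boot.
From mathcomp Require Import boolp classical_sets cardinality.
Set Implicit Arguments. Unset Strict Implicit. Unset Printing Implicit Defensive.

(* Following the usual convention for clones,
   arities are positive: a partial function of arity n.+1 is a finite map
   from (n.+1)-tuples of bools to option bool (None = outside the domain). *)
Definition pmap (n : nat) := {ffun n.-tuple bool -> option bool}.

Definition pfun := {n : nat & pmap n.+1}.

Definition mkpf (n : nat) (f : pmap n.+1) : pfun := existT (fun k => pmap k.+1) n f.

Definition total (f : pfun) : Prop := forall x, projT2 f x != None.

Definition proj (n : nat) (i : 'I_n.+1) : pmap n.+1 :=
  [ffun x => Some (tnth x i)].

Definition comp (n m : nat) (f : pmap n) (g : 'I_n -> pmap m) : pmap m :=
  [ffun x => if [forall i, g i x != None]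
             then f [tuple odflt false (g i x) | i < n]
             else None].

Definition partial_clone (X : set pfun) : Prop :=
  (forall n (i : 'I_n.+1), X (mkpf (proj i))) /\
  (forall n m (f : pmap n.+1) (g : 'I_n.+1 -> pmap m.+1),
      X (mkpf f) -> (forall i, X (mkpf (g i))) -> X (mkpf (comp f g))).

Definition total_clone (C : set pfun) : Prop :=
  partial_clone C /\ (forall f, C f -> total f).

Definition restriction (n : nat) (g f : pmap n) : Prop :=
  forall x, g x = None \/ g x = f x.

Definition strong (X : set pfun) : Prop :=
  forall n (f g : pmap n.+1), X (mkpf f) -> restriction g f -> X (mkpf g).

Definition Istr (C : set pfun) : set (set pfun) :=
  [set X | partial_clone X /\ strong X /\
           (forall f, (X f /\ total f) <-> C f)].

Definition L : set pfun :=
  [set f : pfun | exists (a0 : bool) (a : 'I_(projT1 f).+1 -> bool),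
     forall x, projT2 f x =
       Some (a0 (+) \big[addb/false]_(i < (projT1 f).+1) (a i && tnth x i))].

Definition T (a : bool) : set pfun :=
  [set f : pfun | total f /\ projT2 f [tuple of nseq (projT1 f).+1 a] = Some a].

Definition S : set pfun :=
  [set f : pfun | total f /\ forall x : (projT1 f).+1.-tuple bool,
     projT2 f (map_tuple negb x) = omap negb (projT2 f x)].

From Pilot Require Import Defs.
From HB Require Import structures.
From mathcomp Require Import all_boot zify.
From mathcomp Require Import boolp classical_sets cardinality.

(* Call a partial function f total on a D-image of a set K of points if
   f (psi_1, ..., psi_k) is defined on all of K for some psi_i in D.  For any
   family of templates K_i, the restrictions of members of D together with the
   functions that are total on no D-image of any K_i, i in A, form a strong
   partial clone with total part D.  We take for K_n (n in N) the points of
   arity 2n+9 whose shift by a constant b has weight 1, 2 or full; the witness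
   h_n, defined exactly on K_n, is total on the trivial image of K_n, but on no
   D-image of K_m with m <> n: the members of D are affine, their linear parts
   must then preserve these weights (for S, self-duality first kills the affine
   offset), and such linear maps only exist between equal arities.  So
   A |-> X_A is injective on sets of naturals, while partial functions are
   countable. *)

Set Implicit Arguments. Unset Strict Implicit. Unset Printing Implicit Defensive.

(* Without these, [seq.pmap] and [ssrfun.comp] shadow the clone notions. *)
Notation pmap := Defs.pmap.
Notation comp := Defs.comp.

Lemma compE n m (f : pmap n) (g : 'I_n -> pmap m) x :
  comp f g x = if [forall i, g i x != None]
               then f [tuple odflt false (g i x) | i < n] else None.
Proof. by rewrite ffunE. Qed.

Lemma comp_defined n m (f : pmap n) (g : 'I_n -> pmap m) x i :
  comp f g x != None -> g i x != None.
Proof. by rewrite compE; case: ifP => // /forallP. Qed.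

Lemma restriction_refl n (f : pmap n) : restriction f f.
Proof. by move=> x; right. Qed.

Lemma restriction_comp n m (f d : pmap n) (g e : 'I_n -> pmap m) :
  restriction f d -> (forall i, restriction (g i) (e i)) ->
  restriction (comp f g) (comp d e).
Proof.
move=> fd ge x; rewrite !compE.
case: ifP => [/forallP gx|]; last by left.
have ge_x i : g i x = e i x by case: (ge i x) => // gN; move: (gx i); rewrite gN.
have -> : [forall i, e i x != None] by apply/forallP => i; rewrite -ge_x.
rewrite (eq_mktuple _ (fun i => congr1 (odflt false) (ge_x i))).
exact: fd.
Qed.

Section TemplateClones.
Variable D : set pfun.
Hypothesis clD : total_clone D.

Definition restrD : set pfun :=
  fun F => exists d : pmap (projT1 F).+1, D (mkpf d) /\ restriction (projT2 F) d.

Definition total_on_image c (K : pred (c.+1.-tuple bool)) k (f : pmap k.+1) :=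
  exists psi : 'I_k.+1 -> pmap c.+1, (forall i, D (mkpf (psi i))) /\
    forall p, K p -> f [tuple odflt false (psi i p) | i < k.+1] != None.

Lemma D_defined n (d : pmap n.+1) x : D (mkpf d) -> d x != None.
Proof. by move=> /clD.2 /(_ x). Qed.

Lemma total_on_image_restriction c K k (f g : pmap k.+1) :
  restriction g f -> @total_on_image c K k g -> total_on_image K f.
Proof.
move=> gf [psi [Dpsi Kg]]; exists psi; split => // p Kp.
by case: (gf [tuple odflt false (psi i p) | i < k.+1]) (Kg p Kp) => ->.
Qed.

Lemma total_on_image_comp_arg c K k m (f : pmap k.+1) (g : 'I_k.+1 -> pmap m.+1) i :
  @total_on_image c K m (comp f g) -> total_on_image K (g i).
Proof.
by move=> [psi [Dpsi Kfg]]; exists psi; split => // p /Kfg /comp_defined.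
Qed.

Lemma total_on_image_comp c K k m (f : pmap k.+1) (g e : 'I_k.+1 -> pmap m.+1) :
  (forall i, D (mkpf (e i))) -> (forall i, restriction (g i) (e i)) ->
  @total_on_image c K m (comp f g) -> total_on_image K f.
Proof.
move=> De ge [psi [Dpsi Kfg]].
exists (fun i => comp (e i) psi); split => [i|p Kp]; first exact: clD.1.2.
have fgx := Kfg p Kp; set x := [tuple odflt false (psi i p) | i < m.+1] in fgx.
have psi_p : [forall i, psi i p != None] by apply/forallP => i; exact: D_defined.
have eg i : comp (e i) psi p = g i x.
  rewrite compE psi_p; case: (ge i x) => [gN|-> //].
  by move: (comp_defined i fgx); rewrite gN.
move: fgx; rewrite compE; case: ifP => // _.
by rewrite (eq_mktuple _ (fun i => congr1 (odflt false) (eg i))).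
Qed.

Variables (I : Type) (tmpl_ar : I -> nat) (tmpl : forall i, pred ((tmpl_ar i).+1.-tuple bool)).

Definition tmpl_clone (A : set I) : set pfun :=
  fun F => restrD F \/ forall i, A i -> ~ total_on_image (@tmpl i) (projT2 F).

Lemma tmpl_clone_comp (A : set I) n m (f : pmap n.+1) (g : 'I_n.+1 -> pmap m.+1) :
  tmpl_clone A (mkpf f) -> (forall i, tmpl_clone A (mkpf (g i))) ->
  tmpl_clone A (mkpf (comp f g)).
Proof.
move=> Af Ag.
have [[i g_i]|all_restrD] := pselect (exists i, ~ restrD (mkpf (g i))).
  right => j Aj /(total_on_image_comp_arg i).
  by case: (Ag i) => [/g_i|/(_ j Aj)].
have /choice [e ge] : forall i, exists e : pmap m.+1, D (mkpf e) /\ restriction (g i) e.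
  by move=> i; apply: contra_notP all_restrD => not_i; exists i.
case: Af => [[d [Dd fd]]|not_f].
  left; exists (comp d e); split; first by apply: clD.1.2 => // i; exact: (ge i).1.
  by apply: restriction_comp => // i; exact: (ge i).2.
right => j Aj /(total_on_image_comp (fun i => (ge i).1) (fun i => (ge i).2)).
exact: not_f.
Qed.

Lemma tmpl_clone_Istr (A : set I) :
  (exists i, A i /\ exists p, @tmpl i p) -> Istr D (tmpl_clone A).
Proof.
move=> [i0 [Ai0 [p0 Kp0]]]; split; [split|split].
- by move=> n i; left; exists (proj i); split; [exact: clD.1.1|exact: restriction_refl].
- exact: tmpl_clone_comp.
- move=> n f g [[d [Dd fd]]|not_f] gf.
    by left; exists d; split => // x; case: (gf x) => ->; [left|exact: fd].
  by right => i Ai /(total_on_image_restriction gf); exact: not_f.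
- case=> n f; split => [[[[d [Dd fd]]|not_f] tot_f]|Df].
  + suff -> : f = d by [].
    by apply/ffunP => x; case: (fd x) => // fN; move: (tot_f x); rewrite fN.
  + exfalso; apply: (not_f i0 Ai0); exists (fun _ => proj ord0).
    by split => [i|p _]; [exact: clD.1.1|exact: tot_f].
  + by split; [left; exists f; split => //; exact: restriction_refl|exact: clD.2].
Qed.

End TemplateClones.

Lemma card_le_set_set_nat (X : set (set pfun)) : (X #<= [set: set nat])%card.
Proof.
apply/pcard_injP; exists (fun A => pickle @` A)%classic => A B _ _ AB.
apply/funext => F; apply/propext.
have pickle_inj : injective (@pickle pfun) := pcan_inj pickleK.
by rewrite -[A F](image_inj pickle_inj) AB image_inj.
Qed.

Section Continuum.
Variable D : set pfun.
Hypothesis clD : total_clone D.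
Variables (tmpl_ar : option nat -> nat) (tmpl : forall i, pred ((tmpl_ar i).+1.-tuple bool)).
Variables (wit_ar : nat -> nat) (wit : forall n, pmap (wit_ar n).+1).
Hypothesis tmpl_base_nonempty : exists p, @tmpl None p.
Hypothesis wit_not_restrD : forall n, ~ restrD D (mkpf (wit n)).
Hypothesis wit_total_on_own : forall n, total_on_image D (@tmpl (Some n)) (wit n).
Hypothesis wit_not_total_on_base : forall n, ~ total_on_image D (@tmpl None) (wit n).
Hypothesis wit_not_total_on_other :
  forall n m, n <> m -> ~ total_on_image D (@tmpl (Some m)) (wit n).

(* The base index keeps [with_base set0] nonempty, as [tmpl_clone_Istr] needs. *)
Definition with_base (A : set nat) : set (option nat) :=
  fun i => if i is Some n then A n else True.

Lemma tmpl_clone_subset (A B : set nat) :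
  tmpl_clone D tmpl (with_base A) = tmpl_clone D tmpl (with_base B) -> (A `<=` B)%classic.
Proof.
move=> AB n An; apply: contrapT => Bn.
have : tmpl_clone D tmpl (with_base B) (mkpf (wit n)).
  right => -[m Bm|_]; last exact: wit_not_total_on_base.
  by apply: wit_not_total_on_other => nm; apply: Bn; rewrite nm.
rewrite -AB => -[/wit_not_restrD //|not_wit].
exact: (not_wit (Some n) An (wit_total_on_own n)).
Qed.

Lemma Istr_card_continuum : (Istr D #= [set: set nat])%card.
Proof.
apply: Cantor_Bernstein; first exact: card_le_set_set_nat.
apply/pcard_leP/injfunPex; exists (fun A => tmpl_clone D tmpl (with_base A)).
  by move=> A _; apply: tmpl_clone_Istr => //; exists None.
move=> A B _ _ AB; apply/funext => n; apply/propext.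
by split; apply: tmpl_clone_subset; [|symmetry].
Qed.

End Continuum.

Section Weight.
Variable n : nat.
Implicit Types u v : 'I_n -> bool.

Definition wt v := #|[set i | v i]|.

Definition wt_12_full v := [|| wt v == 1, wt v == 2 | wt v == n].

Lemma wt_le v : wt v <= n.
Proof. by rewrite /wt; apply: leq_trans (max_card _) _; rewrite card_ord. Qed.

Lemma eq_wt u v : u =1 v -> wt u = wt v.
Proof. by move=> uv; apply: eq_card => i; rewrite !inE uv. Qed.

Lemma wt_negb v : wt (fun i => ~~ v i) = n - wt v.
Proof.
rewrite /wt; have -> : [set i | ~~ v i] = ~: [set i | v i] by apply/setP => i; rewrite !inE.
by rewrite cardsCs finset.setCK card_ord.
Qed.

Lemma wt_addb_le u v : wt (fun i => u i (+) v i) <= wt u + wt v.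
Proof.
apply: leq_trans (leq_card_setU [set i | u i] [set i | v i]).
by apply: subset_leq_card; apply/fintype.subsetP => i; rewrite !inE; case: (u i).
Qed.

Lemma wt_addb_disjoint u v : (forall i, ~~ (u i && v i)) ->
  wt (fun i => u i (+) v i) = wt u + wt v.
Proof.
move=> uv; rewrite /wt -cardsUI.
have -> : [set i | u i] :&: [set i | v i] = finset.set0.
  by apply/setP => i; rewrite !inE; apply/negbTE.
rewrite cards0 addn0; apply: eq_card => i; rewrite !inE.
by move: (uv i); case: (u i); case: (v i).
Qed.

Lemma wt0 v : (forall i, ~~ v i) -> wt v = 0.
Proof. by move=> nv; apply: eq_card0 => i; rewrite !inE (negbTE (nv i)). Qed.

Lemma wt_full v : (forall i, v i) -> wt v = n.
Proof.
move=> vT; rewrite /wt (eq_card (B := [set: 'I_n])) ?cardsT ?card_ord // => i.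
by rewrite !inE vT.
Qed.

Lemma wt_fullP v : wt v = n -> forall i, v i.
Proof.
move=> vn i; apply: contraT => nvi.
have : wt (fun i => ~~ v i) == 0 by rewrite wt_negb vn subnn.
by rewrite cards_eq0 => /eqP/setP/(_ i); rewrite !inE nvi.
Qed.

Lemma eq_wt_12_full u v : u =1 v -> wt_12_full u = wt_12_full v.
Proof. by move=> /eq_wt uv; rewrite /wt_12_full uv. Qed.

Lemma wt_le2_support v a b : wt v <= 2 -> v a -> v b -> a != b ->
  forall i, v i = (i == a) || (i == b).
Proof.
move=> v2 va vb ab.
have ab_v : [set a; b] = [set i | v i].
  apply/eqP; rewrite eqEcard cards2 ab v2 andbT.
  by apply/fintype.subsetP => i; rewrite !inE => /orP[] /eqP ->.
by move=> i; move/setP: ab_v => /(_ i); rewrite !inE => <-.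
Qed.

Lemma wt_12_full_full : wt_12_full (fun _ => true).
Proof. by rewrite /wt_12_full wt_full ?eqxx ?orbT. Qed.

End Weight.

Lemma big_addb_unique n (F : 'I_n -> bool) :
  (forall j k, F j -> F k -> j = k) -> \big[addb/false]_(j < n) F j = [exists j, F j].
Proof.
move=> F_uniq; case: (pickP F) => [j Fj|F0]; last first.
  by rewrite big1 //; apply/esym/negbTE/existsP => -[j]; rewrite F0.
rewrite (bigD1 j) //= Fj big1 => [|k kj]; first by apply/esym/existsP; exists j.
by apply/negbTE; apply: contraNN kj => Fk; apply/eqP; exact: F_uniq.
Qed.

Lemma big_addb_true n : \big[addb/false]_(j < n) true = odd n.
Proof. by elim: n => [|n IHn]; rewrite ?big_ord0 // big_ord_recr /= IHn addbT. Qed.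

Section WeightPreservingColumns.
Variables N M : nat.
Variable y : 'I_N.+1 -> 'I_M.+1 -> bool.
Hypotheses (N_ge3 : 3 <= N) (M_ge4 : 4 <= M) (N_odd : odd N.+1) (M_odd : odd M.+1).
Hypothesis wt_col : forall j, wt_12_full (y j).
Hypothesis wt_col_addb : forall j k, j != k -> wt_12_full (fun i => y j i (+) y k i).
Hypothesis wt_col_sum : wt_12_full (fun i => \big[addb/false]_(j < N.+1) y j i).

Lemma exists_other_col (j : 'I_N.+1) : exists k, k != j.
Proof.
have [->|j0] := eqVneq j ord0; last by exists ord0; rewrite eq_sym.
by exists (inord 1); apply/eqP => /(congr1 val) /=; rewrite inordK //; lia.
Qed.

Lemma wt_col_12 j : (wt (y j) == 1) || (wt (y j) == 2).
Proof.
move: (wt_col j); rewrite /wt_12_full; case/or3P => [/eqP->|/eqP->|/eqP yj_full] //.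
have [k kj] := exists_other_col j.
have jk_wt : wt (fun i => y j i (+) y k i) = M.+1 - wt (y k).
  by rewrite -wt_negb; apply: eq_wt => i; rewrite (wt_fullP yj_full).
have jk : j != k by rewrite eq_sym.
move: (wt_col k) (wt_col_addb jk); rewrite /wt_12_full jk_wt.
by case/or3P => /eqP h1; case/or3P => /eqP h2; lia.
Qed.

Lemma wt_col_le2 j : wt (y j) <= 2.
Proof. by case/orP: (wt_col_12 j) => /eqP ->. Qed.

Lemma wt_col_addb_le2 j k : j != k -> wt (fun i => y j i (+) y k i) <= 2.
Proof.
move=> jk; move: (wt_col_addb jk); rewrite /wt_12_full; case/or3P => /eqP jk_wt; rewrite jk_wt //.
have := wt_addb_le (y j) (y k); have := wt_col_le2 j; have := wt_col_le2 k; lia.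
Qed.

Lemma col_inj j k : y j =1 y k -> j = k.
Proof.
move=> yjk; apply/eqP; apply: contraT => jk; move: (wt_col_addb jk).
by rewrite /wt_12_full wt0 // => i; rewrite yjk addbb.
Qed.

Lemma unit_cols_dim : (forall j, wt (y j) = 1) -> N = M.
Proof.
move=> wt1; have /choice [s ys] : forall j, exists p, forall i, y j i = (i == p).
  move=> j; have /cards1P [p yj_p] : wt (y j) == 1 by rewrite wt1.
  by exists p => i; move/setP: yj_p => /(_ i); rewrite !inE.
have s_inj : injective s by move=> j k sjk; apply: col_inj => i; rewrite !ys sjk.
have sum_s : [set i | \big[addb/false]_(j < N.+1) y j i] = s @: [set: 'I_N.+1].
  apply/setP => i; rewrite inE big_addb_unique; last first.
    by move=> j k; rewrite !ys => /eqP -> /eqP /s_inj.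
  apply/existsP/imsetP => [[j]|[j _ ->]]; last by exists j; rewrite ys.
  by rewrite ys => /eqP ->; exists j.
move: wt_col_sum; rewrite /wt_12_full /wt sum_s card_imset // cardsT card_ord.
by case/or3P => /eqP h; lia.
Qed.

Section PairColumn.
Variables (j0 : 'I_N.+1) (p q : 'I_M.+1).
Hypothesis pq : p != q.
Hypothesis y_j0 : forall i, y j0 i = (i == p) || (i == q).

Lemma col_meets_pair j : y j p || y j q.
Proof.
apply: contraT => /norP [np nq].
have jj0 : j != j0 by apply/eqP => jj0; move: np; rewrite jj0 y_j0 eqxx.
have := wt_col_addb_le2 jj0; rewrite wt_addb_disjoint; last first.
  by move=> i; rewrite y_j0; case: eqP => [->|_]; case: eqP => [->|_];
    rewrite ?(negbTE np) ?(negbTE nq) ?andbF.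
have -> : wt (y j0) = 2.
  rewrite /wt (eq_card (B := [set p; q])) ?cards2 ?pq // => i.
  by rewrite !inE y_j0.
by case/orP: (wt_col_12 j) => /eqP ->.
Qed.

Lemma cols_agree_off_pair j k : ~~ y j p -> y j q -> y k p -> ~~ y k q ->
  forall i, i != p -> i != q -> y j i = y k i.
Proof.
move=> njp jq kp nkq i ip iq.
have jk : j != k by apply/eqP => jk; move: njp; rewrite jk kp.
have := wt_le2_support (wt_col_addb_le2 jk) (a := p) (b := q).
rewrite (negbTE njp) kp jq (negbTE nkq) => /(_ erefl erefl pq i).
by rewrite (negbTE ip) (negbTE iq); case: (y j i); case: (y k i).
Qed.

(* Otherwise every column is one of three columns, but there are at least four. *)
Lemma cols_share_point : (forall j, y j p) \/ (forall j, y j q).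
Proof.
have [|/existsNP [b /negP nbp]] := pselect (forall j, y j p); first by left.
have [|/existsNP [c /negP ncq]] := pselect (forall j, y j q); first by right.
exfalso.
have bq : y b q by move: (col_meets_pair b); rewrite (negbTE nbp).
have cp : y c p by move: (col_meets_pair c); rewrite (negbTE ncq) orbF.
have all3 j : j \in [:: j0; b; c].
  case jp: (y j p); case jq: (y j q).
  - suff -> : j = j0 by rewrite !inE eqxx.
    apply: col_inj => i; rewrite y_j0.
    exact: wt_le2_support (wt_col_le2 j) jp jq pq i.
  - suff -> : j = c by rewrite !inE eqxx !orbT.
    apply: col_inj => i.
    have [->|ip] := eqVneq i p; first by rewrite jp cp.
    have [->|iq] := eqVneq i q; first by rewrite jq (negbTE ncq).
    rewrite -(cols_agree_off_pair (j := b) (k := j)) ?jp ?jq //.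
    exact: cols_agree_off_pair.
  - suff -> : j = b by rewrite !inE eqxx !orbT.
    apply: col_inj => i.
    have [->|ip] := eqVneq i p; first by rewrite jp (negbTE nbp).
    have [->|iq] := eqVneq i q; first by rewrite jq bq.
    rewrite (cols_agree_off_pair (j := j) (k := c)) ?jp ?jq //.
    by rewrite -(cols_agree_off_pair (j := b) (k := c)).
  - by move: (col_meets_pair j); rewrite jp jq.
have : #|'I_N.+1| <= #|[:: j0; b; c]| by apply/subset_leq_card/fintype.subsetP => j _.
by move/leq_trans/(_ (card_size _)); rewrite card_ord /=; lia.
Qed.

End PairColumn.

Section StarColumns.
Variable c : 'I_M.+1.
Hypothesis y_c : forall j, y j c.

Lemma star_col j i : i != c -> y j i -> forall i', y j i' = (i' == c) || (i' == i).
Proof. by move=> ic yji; apply: wt_le2_support; rewrite ?wt_col_le2 // eq_sym. Qed.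

Lemma star_leaf_inj j k i : i != c -> y j i -> y k i -> j = k.
Proof.
by move=> ic yji yki; apply: col_inj => i'; rewrite (star_col ic yji) (star_col ic yki).
Qed.

Definition leaf_cols := [set j | [exists i, (i != c) && y j i]].
Definition leaf j := odflt c [pick i | (i != c) && y j i].

Lemma leafP j : j \in leaf_cols -> (leaf j != c) && y j (leaf j).
Proof.
rewrite inE /leaf => /existsP [i ci]; case: pickP => [i' //|/(_ i)].
by rewrite ci.
Qed.

Lemma leaf_unique j i : i != c -> y j i -> leaf j = i.
Proof.
move=> ic yji.
have /andP [lc yjl] : (leaf j != c) && y j (leaf j).
  by apply: leafP; rewrite inE; apply/existsP; exists i; rewrite ic.
by move: yjl; rewrite (star_col ic yji) (negbTE lc) => /eqP.
Qed.

Lemma card_leaf_cols : N <= #|leaf_cols|.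
Proof.
suff : #|~: leaf_cols| <= 1 by have := cardsC leaf_cols; rewrite card_ord; lia.
apply/card_le1P => j; rewrite !inE => nj k; rewrite !inE.
apply/idP/eqP => [nk|-> //]; apply: col_inj => i; move/existsPn: nj; move/existsPn: nk.
have [->|ic] := eqVneq i c; first by rewrite !y_c.
by move=> /(_ i) + /(_ i); rewrite ic /= => /negbTE -> /negbTE ->.
Qed.

Lemma star_cols_dim : N = M.
Proof.
have sum_leaves : [set i | \big[addb/false]_(j < N.+1) y j i] = c |: (leaf @: leaf_cols).
  apply/setP => i; rewrite !inE; have [->|ic] /= := eqVneq i c.
    by rewrite (eq_bigr (fun _ => true)) ?big_addb_true // => j _; rewrite y_c.
  rewrite big_addb_unique; last by move=> j k; exact: star_leaf_inj.
  apply/existsP/imsetP => [[j yji]|[j lj ->]]; last by exists j; case/andP: (leafP lj).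
  exists j; last by rewrite (leaf_unique ic yji).
  by rewrite inE; apply/existsP; exists i; rewrite ic.
have c_leaf : c \notin leaf @: leaf_cols.
  by apply/imsetP => -[j lj cj]; have := leafP lj; rewrite -cj eqxx.
have leaf_inj : {in leaf_cols &, injective leaf}.
  move=> j k lj lk jk; case/andP: (leafP lj) => l1 l2; case/andP: (leafP lk) => _ l3.
  by apply: (star_leaf_inj l1 l2); rewrite jk.
move: wt_col_sum card_leaf_cols (cardsC leaf_cols).
rewrite /wt_12_full /wt sum_leaves cardsU1 c_leaf card_in_imset // add1n card_ord.
by case/or3P => /eqP h; lia.
Qed.

End StarColumns.

(* The columns are distinct unit vectors, or they form a star through a common
   point; either way the weight of their sum determines N. *)
Lemma wt_preserving_cols_dim : N = M.
Proof.
have [|/existsNP [j0 wt_j0]] := pselect (forall j, wt (y j) = 1); first exact: unit_cols_dim.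
have /cards2P [p [q [pq yj0_pq]]] : wt (y j0) == 2.
  by case/orP: (wt_col_12 j0) => // /eqP.
have y_j0 i : y j0 i = (i == p) || (i == q).
  by move/setP: yj0_pq => /(_ i); rewrite !inE.
by case: (cols_share_point pq y_j0) => /star_cols_dim.
Qed.

End WeightPreservingColumns.

Section OffsetColumns.
Variables N M : nat.
Variable c : 'I_M.+1 -> bool.
Variable z : 'I_N.+1 -> 'I_M.+1 -> bool.
Hypotheses (N_ge3 : 3 <= N) (M_ge8 : 8 <= M).
Hypothesis wt_negc : wt_12_full (fun i => ~~ c i).
Hypothesis wt_z : forall j, wt_12_full (z j).
Hypothesis wt_z_addb : forall j k, j != k -> wt_12_full (fun i => z j i (+) z k i (+) c i).

Section NegOffsetNotFull.
Hypothesis negc_not_full : wt (fun i => ~~ c i) != M.+1.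

Lemma offset_not_wt_12_full : ~~ wt_12_full c.
Proof.
move: wt_negc negc_not_full; rewrite /wt_12_full wt_negb; have := wt_le c.
by move=> ? /or3P[] /eqP h; rewrite ?h //; lia.
Qed.

Lemma offset_cols_neq j k : j != k -> ~ z j =1 z k.
Proof.
move=> jk zjk; have zc : wt (fun i => z j i (+) z k i (+) c i) = wt c.
  by apply: eq_wt => i; rewrite zjk addbb.
by move: (wt_z_addb jk) offset_not_wt_12_full; rewrite /wt_12_full zc => ->.
Qed.

Lemma small_offset_cols_addb j k : j != k -> wt (z j) <= 2 -> wt (z k) <= 2 ->
  forall i, z j i (+) z k i = ~~ c i.
Proof.
move=> jk zj2 zk2 i.
have : wt (fun i => ~~ (z j i (+) z k i (+) c i)) <= 6.
  rewrite (eq_wt (v := fun i => (z j i (+) z k i) (+) ~~ c i)) => [|i']; last by rewrite addbN.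
  apply: leq_trans (wt_addb_le _ _) _; have := wt_addb_le (z j) (z k).
  by move: wt_negc negc_not_full; rewrite /wt_12_full => /or3P[] /eqP -> //; lia.
rewrite wt_negb; move: (wt_z_addb jk); rewrite /wt_12_full.
case/or3P => /eqP full; rewrite full; try lia.
by move: (wt_fullP full i); case: (z j i); case: (z k i); case: (c i).
Qed.

Lemma card_big_offset_cols : #|[set j | 2 < wt (z j)]| <= 1.
Proof.
apply/card_le1P => j; rewrite inE => zj k; rewrite inE.
have full l : 2 < wt (z l) -> forall i, z l i.
  by move: (wt_z l); rewrite /wt_12_full => /or3P[] /eqP zl; rewrite zl // => _; exact: wt_fullP.
apply/idP/eqP => [zk|-> //]; have [//|kj] := eqVneq k j.
by case: (offset_cols_neq kj) => i; rewrite !full.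
Qed.

Lemma card_small_offset_cols : #|[set j | wt (z j) <= 2]| <= 2.
Proof.
rewrite leqNgt; apply/negP => /card_gt2P [j [k [l [[zj zk zl] [jk kl lj]]]]].
rewrite !inE in zj zk zl; have jl : j != l by rewrite eq_sym.
apply: (offset_cols_neq kl) => i.
move: (small_offset_cols_addb jk zj zk i) (small_offset_cols_addb jl zj zl i).
by case: (z j i); case: (z k i); case: (z l i); case: (c i).
Qed.

End NegOffsetNotFull.

Lemma offset_zero : forall i, c i = false.
Proof.
have [negc_full|negc_not_full] := eqVneq (wt (fun i => ~~ c i)) M.+1.
  by move=> i; apply/negbTE; exact: (wt_fullP negc_full).
have : ~: [set j | wt (z j) <= 2] = [set j | 2 < wt (z j)].
  by apply/setP => j; rewrite !inE ltnNge.
move: (cardsC [set j | wt (z j) <= 2]) => + big_cols; rewrite big_cols card_ord.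
have := card_big_offset_cols negc_not_full; have := card_small_offset_cols negc_not_full.
lia.
Qed.

End OffsetColumns.

Section InnerProduct.
Variable n : nat.
Implicit Types a u v : 'I_n -> bool.

Definition dot a u := \big[addb/false]_(j < n) (a j && u j).

Definition unitv (k : 'I_n) j := j == k.

Definition pairv (j k : 'I_n) l := (l == j) (+) (l == k).

Lemma dot_addb a u v : dot a (fun j => u j (+) v j) = dot a u (+) dot a v.
Proof. by rewrite /dot -big_split; apply: eq_bigr => j _; case: (a j). Qed.

Lemma dot_unitv a k : dot a (unitv k) = a k.
Proof.
by rewrite /dot /unitv (bigD1 k) //= eqxx andbT big1 ?addbF // => j /negbTE ->; rewrite andbF.
Qed.

Lemma dot_pairv a j k : dot a (pairv j k) = a j (+) a k.
Proof. by rewrite dot_addb !dot_unitv. Qed.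

Lemma dot_const a b : dot a (fun _ => b) = b && \big[addb/false]_(j < n) a j.
Proof.
case: b; first by apply: eq_bigr => j _; rewrite andbT.
by rewrite /dot big1 // => j _; rewrite andbF.
Qed.

Lemma wt_12_full_unitv k : wt_12_full (unitv k).
Proof. by rewrite /wt_12_full /wt (eq_card (B := [set k])) ?cards1 // => j; rewrite !inE. Qed.

Lemma wt_12_full_pairv j k : j != k -> wt_12_full (pairv j k).
Proof.
move=> jk; rewrite /wt_12_full /wt (eq_card (B := [set j; k])) ?cards2 ?jk ?orbT // => l.
by rewrite !inE /pairv; have [->|] := eqVneq l j; [rewrite (negbTE jk)|]; case: (eqVneq l k).
Qed.

Definition lin (a0 : bool) a (x : n.-tuple bool) := a0 (+) dot a (tnth x).

Definition shifted b u : n.-tuple bool := [tuple u j (+) b | j < n].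

Lemma lin_shifted (a0 : bool) a b u :
  lin a0 a (shifted b u) = a0 (+) (b && \big[addb/false]_(j < n) a j) (+) dot a u.
Proof.
rewrite /lin (_ : dot a _ = dot a (fun j => u j (+) b)); last first.
  by apply: eq_bigr => j _; rewrite tnth_mktuple.
by rewrite dot_addb dot_const [dot a u (+) _]addbC addbA.
Qed.

Lemma lin_const_tuple (a0 : bool) a (x : n.-tuple bool) b : (forall j, tnth x j = b) ->
  lin a0 a x = a0 (+) (b && \big[addb/false]_(j < n) a j).
Proof.
by move=> xb; rewrite /lin -dot_const; congr (_ (+) _); apply: eq_bigr => j _; rewrite xb.
Qed.

End InnerProduct.

Lemma wt_preserving_matrix_dim N M (a : 'I_M.+1 -> 'I_N.+1 -> bool) :
  3 <= N -> 4 <= M -> odd N.+1 -> odd M.+1 ->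
  (forall u, wt_12_full u -> wt_12_full (fun i => dot (a i) u)) -> N = M.
Proof.
move=> N3 M4 oN oM a_wt; apply: (wt_preserving_cols_dim (y := fun j i => a i j)) => //.
- move=> j; rewrite -(eq_wt_12_full (u := fun i => dot (a i) (unitv j))) => [|i].
    exact/a_wt/wt_12_full_unitv.
  exact: dot_unitv.
- move=> j k jk; rewrite -(eq_wt_12_full (u := fun i => dot (a i) (pairv j k))) => [|i].
    exact/a_wt/wt_12_full_pairv.
  exact: dot_pairv.
- rewrite -(eq_wt_12_full (u := fun i => dot (a i) (fun _ => true))) => [|i].
    exact/a_wt/wt_12_full_full.
  exact: dot_const.
Qed.

Lemma wt_preserving_offset_zero N M (c : 'I_M.+1 -> bool) (a : 'I_M.+1 -> 'I_N.+1 -> bool) :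
  3 <= N -> 8 <= M -> (forall i, \big[addb/false]_(j < N.+1) a i j) ->
  (forall u, wt_12_full u -> wt_12_full (fun i => c i (+) dot (a i) u)) ->
  forall i, c i = false.
Proof.
move=> N3 M8 a_odd ca_wt; apply: (offset_zero (z := fun j i => c i (+) a i j)) => //.
- rewrite -(eq_wt_12_full (u := fun i => c i (+) dot (a i) (fun _ => true))) => [|i].
    exact/ca_wt/wt_12_full_full.
  by rewrite dot_const a_odd addbT.
- move=> j; rewrite -(eq_wt_12_full (u := fun i => c i (+) dot (a i) (unitv j))) => [|i].
    exact/ca_wt/wt_12_full_unitv.
  by rewrite dot_unitv.
- move=> j k jk; rewrite -(eq_wt_12_full (u := fun i => c i (+) dot (a i) (pairv j k))) => [|i].
    exact/ca_wt/wt_12_full_pairv.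
  by rewrite dot_pairv; case: (c i); case: (a i j); case: (a i k).
Qed.

Section Templates.
Variable b : bool.

(* Odd and at least 9, as required by the weight lemmas above. *)
Definition arity n := (2 * n + 8)%N.

Definition in_tmpl k (x : k.+1.-tuple bool) := wt_12_full (fun i => tnth x i (+) b).

Definition tmpl_ar (i : option nat) := if i is Some n then arity n else 0.

Definition tmpl (i : option nat) : pred ((tmpl_ar i).+1.-tuple bool) :=
  if i is Some n return pred ((tmpl_ar i).+1.-tuple bool) then @in_tmpl (arity n) else predT.

Definition wit n : pmap (arity n).+1 :=
  [ffun x => if in_tmpl x
             then Some ((tnth x (inord 0) (+) b) && (tnth x (inord 2) (+) b)) else None].

Lemma in_tmpl_shifted k (u : 'I_k.+1 -> bool) : in_tmpl (shifted b u) = wt_12_full u.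
Proof.
by apply: eq_wt_12_full => i; rewrite tnth_mktuple -addbA addbb addbF.
Qed.

Lemma wit_shifted n (u : 'I_(arity n).+1 -> bool) : wt_12_full u ->
  wit n (shifted b u) = Some (u (inord 0) && u (inord 2)).
Proof. by move=> u_ok; rewrite ffunE in_tmpl_shifted u_ok !tnth_mktuple -!addbA addbb !addbF. Qed.

End Templates.

Section LinearClone.
Variable D : set pfun.
Hypothesis clD : total_clone D.
Hypothesis linD : (D `<=` L)%classic.

Lemma lin_coeffs M N (psi : 'I_M.+1 -> pmap N.+1) : (forall i, D (mkpf (psi i))) ->
  exists (a0 : 'I_M.+1 -> bool) (a : 'I_M.+1 -> 'I_N.+1 -> bool),
    forall i x, psi i x = Some (lin (a0 i) (a i) x).
Proof.
move=> Dpsi; have /choice [f f_lin] : forall i, exists c : bool * ('I_N.+1 -> bool),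
    forall x, psi i x = Some (lin c.1 c.2 x).
  by move=> i; have [a0 [a psi_a]] := linD (Dpsi i); exists (a0, a).
by exists (fun i => (f i).1), (fun i => (f i).2).
Qed.

(* At the shifts of [e_0], [e_1], [e_0 + e_2] and [e_1 + e_2] the witness takes
   the values 0, 0, 1, 0, which no affine function does. *)
Lemma wit_not_restrD b n : ~ restrD D (mkpf (wit b n)).
Proof.
move=> [d [Dd wit_d]]; have [a0 [a d_lin]] := linD Dd.
have d_wit u : wt_12_full u -> lin a0 a (shifted b u) = u (inord 0) && u (inord 2).
  by move=> u_ok; case: (wit_d (shifted b u)); rewrite wit_shifted //= d_lin => -[].
have ord_neq x y : x <= 2 -> y <= 2 -> x != y -> (inord x : 'I_(arity n).+1) != inord y.
  move=> x2 y2; apply: contra => /eqP/(congr1 val) /=.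
  by rewrite !inordK /arity //; lia.
have n01 : (inord 0 : 'I_(arity n).+1) != inord 1 by exact: ord_neq.
have n02 : (inord 0 : 'I_(arity n).+1) != inord 2 by exact: ord_neq.
have n12 : (inord 1 : 'I_(arity n).+1) != inord 2 by exact: ord_neq.
move: (d_wit _ (wt_12_full_unitv (inord 0))) (d_wit _ (wt_12_full_unitv (inord 1))).
move: (d_wit _ (wt_12_full_pairv n02)) (d_wit _ (wt_12_full_pairv n12)).
rewrite !lin_shifted !dot_unitv !dot_pairv /unitv /pairv !eqxx.
rewrite !(eq_sym (inord 2)) (negbTE n01) (negbTE n02) (negbTE n12) /=.
by case: (a0 (+) _) => /=; case: (a (inord 0)); case: (a (inord 1)); case: (a (inord 2)).
Qed.

Lemma wit_total_on_own b n : total_on_image D (@tmpl b (Some n)) (wit b n).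
Proof.
exists (fun i => proj i); split => [i|p p_tmpl]; first exact: clD.1.1.
have -> : [tuple odflt false (proj i p) | i < (arity n).+1] = p.
  by apply: eq_from_tnth => i; rewrite tnth_mktuple ffunE.
by move: p_tmpl; rewrite /= ffunE => ->.
Qed.

Lemma tmpl_image b n m (psi : 'I_(arity n).+1 -> pmap (arity m).+1) a0 a :
  (forall i x, psi i x = Some (lin (a0 i) (a i) x)) ->
  (forall p, @tmpl b (Some m) p ->
     wit b n [tuple odflt false (psi i p) | i < (arity n).+1] != None) ->
  forall u, wt_12_full u -> wt_12_full (fun i => lin (a0 i) (a i) (shifted b u) (+) b).
Proof.
move=> psi_lin psi_def u u_ok.
move: (psi_def (shifted b u)); rewrite /= in_tmpl_shifted u_ok ffunE => /(_ isT).
case: ifP => // + _; rewrite /in_tmpl.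
rewrite (eq_wt_12_full (v := fun i => lin (a0 i) (a i) (shifted b u) (+) b)) // => i.
by rewrite tnth_mktuple psi_lin.
Qed.

Section ConstantPreserving.
Variable b : bool.
Hypothesis presD : (D `<=` T b)%classic.

Lemma wit_not_total_on_base_T n : ~ total_on_image D (@tmpl b None) (wit b n).
Proof.
move=> [psi [Dpsi psi_def]]; move: (psi_def [tuple of nseq 1 b] isT).
have -> : [tuple odflt false (psi i [tuple of nseq 1 b]) | i < (arity n).+1] =
          [tuple of nseq (arity n).+1 b].
  apply: eq_from_tnth => i; rewrite tnth_mktuple tnth_nseq.
  by have /= -> := (presD (Dpsi i)).2.
by rewrite ffunE /in_tmpl /wt_12_full wt0 // => i; rewrite tnth_nseq addbb.
Qed.

Lemma wit_not_total_on_other_T n m :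
  n <> m -> ~ total_on_image D (@tmpl b (Some m)) (wit b n).
Proof.
move=> nm [psi [Dpsi psi_def]]; have [a0 [a psi_lin]] := lin_coeffs Dpsi.
have a0_b i : a0 i (+) (b && \big[addb/false]_(j < (arity m).+1) a i j) = b.
  have := (presD (Dpsi i)).2; rewrite /= psi_lin => -[].
  by rewrite (lin_const_tuple _ _ (b := b)) // => j; rewrite tnth_nseq.
have a_wt u : wt_12_full u -> wt_12_full (fun i => dot (a i) u).
  move=> /(tmpl_image psi_lin psi_def).
  rewrite (eq_wt_12_full (v := fun i => dot (a i) u)) // => i.
  by rewrite lin_shifted a0_b addbC addbA addbb.
apply: nm; suff : arity m = arity n by rewrite /arity; lia.
by apply: (wt_preserving_matrix_dim (a := a)) => //=; rewrite /arity; lia.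
Qed.

End ConstantPreserving.

Section SelfDual.
Hypothesis sdD : (D `<=` S)%classic.

Lemma wit_not_total_on_base_S n : ~ total_on_image D (@tmpl false None) (wit false n).
Proof.
move=> [psi [Dpsi psi_def]].
pose x0 := [tuple of nseq 1 false]; pose v i := odflt false (psi i x0).
have psi_neg i : odflt false (psi i (map_tuple negb x0)) = ~~ v i.
  by rewrite (sdD (Dpsi i)).2 /v; case: (psi i x0) (D_defined clD x0 (Dpsi i)).
move: (psi_def x0 isT) (psi_def (map_tuple negb x0) isT); rewrite !ffunE.
case: ifP => // v_tmpl _; case: ifP => // negv_tmpl _.
move: v_tmpl; rewrite /in_tmpl (eq_wt_12_full (v := v)) => [v_tmpl|i]; last first.
  by rewrite tnth_mktuple addbF.
move: negv_tmpl; rewrite /in_tmpl (eq_wt_12_full (v := fun i => ~~ v i)) => [|i]; last first.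
  by rewrite tnth_mktuple addbF psi_neg.
move: v_tmpl; rewrite /wt_12_full wt_negb; have := wt_le v; rewrite /arity => ?.
by case/or3P => /eqP h1; case/or3P => /eqP h2; lia.
Qed.

Lemma wit_not_total_on_other_S n m :
  n <> m -> ~ total_on_image D (@tmpl false (Some m)) (wit false n).
Proof.
move=> nm [psi [Dpsi psi_def]]; have [a0 [a psi_lin]] := lin_coeffs Dpsi.
have row_odd i : \big[addb/false]_(j < (arity m).+1) a i j.
  have := (sdD (Dpsi i)).2 [tuple false | _ < (arity m).+1]; rewrite !psi_lin => -[].
  rewrite (lin_const_tuple _ _ (b := true)) => [|j]; last by rewrite tnth_map tnth_mktuple.
  rewrite (lin_const_tuple _ _ (b := false)) => [|j]; last by rewrite tnth_mktuple.
  by case: (a0 i); case: (\big[addb/false]_(j < _) a i j).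
have a0_a_wt u : wt_12_full u -> wt_12_full (fun i => a0 i (+) dot (a i) u).
  move=> /(tmpl_image psi_lin psi_def).
  rewrite (eq_wt_12_full (v := fun i => a0 i (+) dot (a i) u)) // => i.
  by rewrite lin_shifted !addbF.
have a0_0 : forall i, a0 i = false.
  by apply: (wt_preserving_offset_zero _ _ row_odd a0_a_wt); rewrite /= /arity; lia.
apply: nm; suff : arity m = arity n by rewrite /arity; lia.
apply: (wt_preserving_matrix_dim (a := a)); rewrite /= /arity; try lia.
move=> u /a0_a_wt; rewrite (eq_wt_12_full (v := fun i => dot (a i) u)) // => i.
by rewrite a0_0.
Qed.

End SelfDual.

Lemma Istr_continuum_of_wit b :
  (forall n, ~ total_on_image D (@tmpl b None) (wit b n)) ->
  (forall n m, n <> m -> ~ total_on_image D (@tmpl b (Some m)) (wit b n)) ->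
  (Istr D #= [set: set nat])%card.
Proof.
move=> base other; apply: (Istr_card_continuum clD (wit_ar := arity) (wit := wit b)) => //.
- by exists [tuple false].
- exact: wit_not_restrD.
- exact: wit_total_on_own.
Qed.

End LinearClone.

Local Open Scope classical_set_scope.

Theorem mainTheorem7 (D : set pfun) :
  total_clone D -> D `<=` L ->
  (D `<=` T false \/ D `<=` T true \/ D `<=` S) ->
  (Istr D #= [set: set nat])%card.
Proof.
move=> clD linD [presD|[presD|sdD]].
- apply: (Istr_continuum_of_wit clD linD (b := false)).
    exact: wit_not_total_on_base_T presD.
  exact: wit_not_total_on_other_T presD.
- apply: (Istr_continuum_of_wit clD linD (b := true)).
    exact: wit_not_total_on_base_T presD.
  exact: wit_not_total_on_other_T presD.
- apply: (Istr_continuum_of_wit clD linD (b := false)).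
    exact: wit_not_total_on_base_S sdD.
  exact: wit_not_total_on_other_S sdD.
Qed.
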